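(* Let $p\in\mathbb R^n$, $\omega\in\mathbb R^p$, let $\xi=p^aP_a+\omega^iL_i$ and let $\psi_t$ be the one-parameter group of isometries generated by $\xi$, $\hat x=\psi_t(x)$. Define $O^a{}_b=e^a{}_{\hat\alpha}(\hat x)\,\frac{\partial\hat x^\alpha}{\partial x^\mu}\,e_b{}^\mu(x)$. Then for $p=0$ and $x=x'$ (i.e. $y=0$), $$O\big|_{p=y=0}=\exp[-tD(\omega)],\qquad D(\omega)=\omega^iD_i.$$
   Context: $(M,g)$ is an $n$-dimensional complete simply connected Riemannian manifold with parallel Riemann tensor (a Riemannian symmetric space). Fix $x'\in M$ and an orthonormal frame $e_a{}^\mu(x')$ at $x'$, extended to a neighbourhood to an orthonormal frame $e_a{}^\mu(x)$ by parallel transport along the geodesics from $x'$, with dual coframe $e^a{}_\mu$; let $y^a$ be the corresponding Riemann normal coordinates centred at $x'$. Frame indices $a,b,\dots\in\{1,\dots,n\}$ are raised/lowered with $\delta_{ab}$; $R_{abcd}$ are the frame components of the curvature at $x'$. The curvature is written as $R_{abcd}=\beta_{ik}E^i{}_{ab}E^k{}_{cd}$ with $E^i{}_{ab}$ ($i=1,\dots,p$) antisymmetric $n\times n$ matrices and $(\beta_{ik})$ real symmetric nondegenerate; $D^a{}_{ib}=-\beta_{ik}E^k{}_{cb}\delta^{ca}$. With $K^a{}_b=R^a{}_{cbd}y^cy^d$, the Killing vector fields are $P_a=(\sqrt K\cot\sqrt K)^b{}_a\,\partial/\partial y^b$ and $L_i=-D^b{}_{ia}y^a\,\partial/\partial y^b$.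 *)

From HB Require Import structures.
From mathcomp Require Import all_boot all_order all_algebra.
From mathcomp Require Import all_classical all_reals all_analysis.
Set Implicit Arguments. Unset Strict Implicit. Unset Printing Implicit Defensive.
Import Order.TTheory GRing.Theory Num.Theory.
Import numFieldNormedType.Exports.
Local Open Scope ring_scope.

Definition mexp (R : realType) (n : nat) (A : 'M[R]_n) : 'M[R]_n :=
  limn (series (fun k : nat => (k`!%:R)^-1 *: A ^+ k)).

Definition Dmat (R : realType) (n p : nat) (beta : 'M[R]_p)
    (E : 'I_p -> 'M[R]_n) (i : 'I_p) : 'M[R]_n :=
  \matrix_(a < n, b < n) - \sum_(k < p) \sum_(c < n)
      beta i k * E k c b * (c == a)%:R.

Definition Domega (R : realType) (n p : nat) (beta : 'M[R]_p)
    (E : 'I_p -> 'M[R]_n) (omega : 'rV[R]_p) : 'M[R]_n :=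
  \sum_(i < p) omega 0 i *: Dmat beta E i.

Definition Rcurv (R : realType) (n p : nat) (beta : 'M[R]_p)
    (E : 'I_p -> 'M[R]_n) (a b c d : 'I_n) : R :=
  \sum_(i < p) \sum_(k < p) beta i k * E i a b * E k c d.

(** Components, in Riemann normal coordinates y centred at x', of the Killing
    field L_i = - D^b_{ia} y^a d/dy^b; y is a row vector, component b. *)
Definition Lfield (R : realType) (n p : nat) (beta : 'M[R]_p)
    (E : 'I_p -> 'M[R]_n) (i : 'I_p) (y : 'rV[R]_n) : 'rV[R]_n :=
  \row_(b < n) - \sum_(a < n) Dmat beta E i b a * y 0 a.

(** xi = p^a P_a + omega^i L_i at p = 0, i.e. xi = omega^i L_i. *)
Definition xi0 (R : realType) (n p : nat) (beta : 'M[R]_p)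
    (E : 'I_p -> 'M[R]_n) (omega : 'rV[R]_p) (y : 'rV[R]_n) : 'rV[R]_n :=
  \sum_(i < p) omega 0 i *: Lfield beta E i y.

Definition ucoord (R : realType) (n : nat) (mu : 'I_n) : 'rV[R]_n :=
  \row_(j < n) (j == mu)%:R.

Definition jac (R : realType) (n : nat) (f : 'rV[R]_n -> 'rV[R]_n)
    (y : 'rV[R]_n) : 'M[R]_n :=
  \matrix_(alpha < n, mu < n) ('D_(@ucoord R n mu) f y) 0 alpha.

(** O^a_b = e^a_alpha(xhat) (d xhat^alpha/d x^mu) e_b^mu(x),
    with frame F y b mu = e_b^mu and coframe C y a alpha = e^a_alpha. *)
Definition Omat (R : realType) (n : nat) (C F : 'rV[R]_n -> 'M[R]_n)
    (psit : 'rV[R]_n -> 'rV[R]_n) (y : 'rV[R]_n) : 'M[R]_n :=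
  \matrix_(a < n, b < n) \sum_(alpha < n) \sum_(mu < n)
     C (psit y) a alpha * jac psit y alpha mu * F y b mu.

From HB Require Import structures.
From mathcomp Require Import all_boot all_order all_algebra.
From mathcomp Require Import all_classical all_reals all_analysis.
From mathcomp Require Import lra ring.
Set Implicit Arguments. Unset Strict Implicit. Unset Printing Implicit Defensive.
Import Order.TTheory GRing.Theory Num.Theory.
Import numFieldNormedType.Exports.
Local Open Scope classical_set_scope.
Local Open Scope ring_scope.

(** At p = 0 the Killing field xi = omega^i L_i is, in normal coordinates,
    the linear vector field y |-> y (-D(omega))^T, so its flow should be
    psi_t(y) = y exp(-t D(omega))^T.  This is proved through the Taylor
    remainder of a linear ODE: by induction, comparing derivatives on [0, t],
    the distance from a solution to its K-th Taylor polynomial is at most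
    B (c t)^K / K!, so the partial sums of the exponential series converge to
    the flow.  Being linear, psi_t fixes the origin and has Jacobian
    exp(-t D(omega)); since frame and coframe are the identity at the origin,
    O = exp(-t D(omega)). *)

Lemma ler_mx_entry_norm (R : realType) m n (M : 'M[R]_(m, n)) i j :
  `|M i j| <= `|M|.
Proof.
rewrite [leRHS]/Num.Def.normr /= mx_normrE.
by apply: le_trans (le_bigmax _ _ (i, j)).
Qed.

Lemma ler_mx_norm (R : realType) m n (M : 'M[R]_(m, n)) (e : R) :
  0 <= e -> (forall i j, `|M i j| <= e) -> `|M| <= e.
Proof.
move=> e0 Me; rewrite [leLHS]/Num.Def.normr /= mx_normrE.
by apply: bigmax_le => // ij _; exact: Me.
Qed.

Lemma ler_norm_mulmx (R : realType) m n p (v : 'M[R]_(m, n)) (M : 'M[R]_(n, p)) :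
  `|v *m M| <= (\sum_i \sum_j `|M i j|) * `|v|.
Proof.
have M0 : 0 <= \sum_i \sum_j `|M i j| by apply/sumr_ge0 => i _; exact/sumr_ge0.
apply: ler_mx_norm => [|i k]; first exact/mulr_ge0.
rewrite mxE (le_trans (ler_norm_sum _ _ _)) // mulr_suml.
apply: ler_sum => l _; rewrite normrM mulrC.
apply: ler_pM => //; last exact: ler_mx_entry_norm.
by rewrite (bigD1 k) //= lerDl; apply: sumr_ge0.
Qed.

Lemma cvg_mxP (R : realType) (T : Type) (F : set_system T) {FF : Filter F} m n
    (u : T -> 'M[R]_(m, n)) (L : 'M[R]_(m, n)) :
  u @ F --> L <-> forall i j, (fun x => u x i j) @ F --> L i j.
Proof.
split=> [uL i j | uL].
  apply/cvgrPdist_le => e e0; near=> x.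
  have := ler_mx_entry_norm (L - u x) i j; rewrite !mxE => /le_trans; apply.
  by near: x; exact: (cvgrPdist_le _ _).1 uL _ e0.
apply/cvgrPdist_le => e e0; near=> x.
apply: ler_mx_norm => [|i j]; first exact: ltW.
rewrite !mxE; move: i j; near: x.
apply: filter_forall => i; apply: filter_forall => j.
exact: (cvgrPdist_le _ _).1 (uL i j) _ e0.
Unshelve. all: by end_near.
Qed.

Lemma cvg_mulmx_trmx (R : realType) (T : Type) (F : set_system T) {FF : Filter F}
    m n p (v : 'M[R]_(m, n)) (u : T -> 'M[R]_(p, n)) (L : 'M[R]_(p, n)) :
  u @ F --> L -> v *m (u x)^T @[x --> F] --> v *m L^T.
Proof.
move=> /cvg_mxP uL; apply/cvg_mxP => i j; rewrite mxE.
under eq_cvg do rewrite mxE.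
apply: cvg_big => [|k _]; first exact: add_continuous.
by rewrite mxE; under eq_cvg do rewrite mxE; apply: cvgMl_tmp.
Qed.

Lemma ucoord_mulmx (R : realType) n p (b : 'I_n) (M : 'M[R]_(n, p)) :
  ucoord R b *m M = row b M.
Proof.
rewrite rowE; congr (_ *m _); apply/rowP => j.
by rewrite !mxE eqxx.
Qed.

Lemma is_derive_mxP (R : realType) (V : normedModType R) m n
    (M : V -> 'M[R]_(m, n)) (x v : V) (dM : 'M[R]_(m, n)) :
  is_derive x v M dM <-> forall i j, is_derive x v (fun y => M y i j) (dM i j).
Proof.
split=> [[dM_ <-] i j | dM_].
  have dMij := (derivable_mxP M x v).1 dM_ i j.
  by apply: DeriveDef => //; rewrite derive_mx // mxE.
have dM_ex : derivable M x v by apply/derivable_mxP => i j; case: (dM_ i j).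
apply: DeriveDef => //; rewrite derive_mx //; apply/matrixP => i j.
by rewrite mxE; case: (dM_ i j).
Qed.

Lemma is_derive_compN (R : realType) n (f : R -> 'rV[R]_n) (df : 'rV[R]_n) s :
  is_derive (- s) (1 : R) f df -> is_derive s (1 : R) (fun r => f (- r)) (- df).
Proof.
move=> /is_derive_mxP f_d; apply/is_derive_mxP => i j.
have := is_derive1_comp (f := fun r => f r i j) (f_d i j) (is_deriveNid s 1).
by rewrite mxE mulrN1.
Qed.

Lemma ler_abs_increment_derive (R : realType) (u U du dU : R -> R) (a b : R) :
  a <= b ->
  (forall r, is_derive r (1 : R) u (du r)) -> (forall r, is_derive r (1 : R) U (dU r)) ->
  (forall r, a < r < b -> `|du r| <= dU r) ->
  `|u b - u a| <= U b - U a.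
Proof.
move=> ab du_u dU_U bound.
have nondecr (g dg : R -> R) : (forall r, is_derive r (1 : R) g (dg r)) ->
    (forall r, a < r < b -> 0 <= dg r) -> g a <= g b.
  move=> dg_g dg0; apply: (@ger0_derive1_le_cc _ g a b).
  all: rewrite ?in_itv /= ?lexx ?ab //.
  - by move=> r rab; rewrite derive1E derive_val dg0.
  - apply: continuous_subspaceT => r; case: (dg_g r) => /derivable1_diffP dr _.
    exact: differentiable_continuous.
have UDu : U a + u a <= U b + u b.
  apply: (nondecr _ _ (fun r => is_deriveD (dU_U r) (du_u r))) => r /bound.
  by rewrite ler_norml => /andP[? ?]; lra.
have UBu : U a - u a <= U b - u b.
  apply: (nondecr _ _ (fun r => is_deriveB (dU_U r) (du_u r))) => r /bound.
  by rewrite ler_norml => /andP[? ?]; lra.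
by rewrite ler_norml; apply/andP; split; lra.
Qed.

Lemma derivable_bounded_segment (R : realType) (V : normedModType R)
    (f : R -> V) (a b : R) :
  (forall r, derivable f r 1) -> exists B, forall r, a <= r <= b -> `|f r| <= B.
Proof.
move=> df.
have fcont : {within `[a, b], continuous f}.
  apply: continuous_subspaceT => r.
  exact/differentiable_continuous/derivable1_diffP.
have [M [_ hM]] := compact_bounded (continuous_compact fcont (@segment_compact _ a b)).
exists (M + 1) => r rab; apply: (hM (M + 1)); first by rewrite ltrDl.
by exists r => //; rewrite /= in_itv /=.
Qed.

Lemma is_derive_exp_coeff (R : realType) (k : nat) (c s : R) :
  is_derive s (1 : R) (fun r => r ^+ k.+1 / k.+1`!%:R * c) (s ^+ k / k`!%:R * c).
Proof.
have -> : (fun r : R => r ^+ k.+1 / k.+1`!%:R * c) =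
    (c / k.+1`!%:R) \o* (@GRing.exp R ^~ k.+1).
  by apply/funext => r /=; rewrite mulrA mulrAC.
apply: DeriveDef; first exact/derivableM/derivable_cst/exprn_derivable.
rewrite deriveMr ?exp_derive//; last exact: exprn_derivable.
have k1 : (k`!%:R : R) != 0 by rewrite pnatr_eq0 -lt0n fact_gt0.
by rewrite /GRing.scale /= mulr1 factS natrM; field; rewrite k1 addrC natr1 pnatr_eq0.
Qed.

Lemma cvg_exp_coeff0 (R : realType) (B x : R) :
  B * x ^+ K / K`!%:R @[K --> \oo] --> (0 : R).
Proof.
have -> : (fun K => B * x ^+ K / K`!%:R) = B \o* exp_coeff x.
  by apply/funext => K; rewrite /exp_coeff /= [RHS]mulrC mulrA.
rewrite -[0](mul0r B); apply: cvgMr_tmp.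
exact: cvg_series_cvg_0 (is_cvg_series_exp_coeff x).
Qed.

Lemma cvg_dist_le (R : realType) (V : normedModType R) (u : nat -> V) (l : V)
    (v : nat -> R) :
  v @ \oo --> 0 -> (forall K, `|l - u K| <= v K) -> u @ \oo --> l.
Proof.
move=> v0 uv; apply/cvgrPdist_le => e e0.
near=> K; apply: le_trans (uv K) (le_trans (ler_norm _) _).
by near: K; exact: cvgr0_norm_le v0 _ e0.
Unshelve. all: by end_near.
Qed.

Lemma exprZmx (R : comPzSemiRingType) n (a : R) (A : 'M[R]_n) k :
  (a *: A) ^+ k = a ^+ k *: A ^+ k.
Proof.
elim: k => [|k IH]; first by rewrite !expr0 scale1r.
by rewrite !exprS IH -!mulmxE -scalemxAl -scalemxAr scalerA.
Qed.

Definition expmx_series (R : realType) n (M : 'M[R]_n) : nat -> 'M[R]_n :=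
  series (fun k => (k`!%:R)^-1 *: M ^+ k).

Section ExpTaylor.
Variables (R : realType) (n : nat) (A : 'M[R]_n) (y : 'rV[R]_n).

Definition expmx_taylor (s : R) (K : nat) : 'rV[R]_n :=
  y *m (expmx_series (s *: A) K)^T.

Lemma expmx_taylorE s K :
  expmx_taylor s K = \sum_(k < K) (s ^+ k / k`!%:R) *: (y *m (A ^+ k)^T).
Proof.
rewrite /expmx_taylor /expmx_series /series /= big_mkord linear_sum mulmx_sumr.
apply: eq_bigr => k _.
by rewrite exprZmx scalerA linearZ /= -scalemxAr mulrC.
Qed.

Lemma expmx_taylor0 K : expmx_taylor 0 K.+1 = y.
Proof.
rewrite expmx_taylorE big_ord_recl /= expr0 fact0 divr1 scale1r expr0.
rewrite trmx1 mulmx1 big1 ?addr0 // => k _.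
by rewrite expr0n /= mul0r scale0r.
Qed.

Lemma is_derive_expmx_taylor s K :
  is_derive s (1 : R) (expmx_taylor ^~ K.+1) (expmx_taylor s K *m A^T).
Proof.
apply/is_derive_mxP => i j; rewrite [i]ord1.
pose c k := (y *m (A ^+ k)^T) 0 j.
have -> : (fun r => expmx_taylor r K.+1 0 j) =
    cst (c 0%N) + \sum_(k < K) (fun r => r ^+ k.+1 / k.+1`!%:R * c k.+1).
  apply/funext => r; rewrite expmx_taylorE big_ord_recl fct_sumE /=.
  rewrite expr0 fact0 divr1 scale1r [in LHS]mxE summxE /c; congr (_ + _).
  by apply: eq_bigr => k _; rewrite mxE.
apply: is_derive_eq.
  apply: is_deriveD.
  by apply: is_derive_sum => k; exact: is_derive_exp_coeff.
rewrite add0r expmx_taylorE mulmx_suml summxE; apply: eq_bigr => k _.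
by rewrite -scalemxAl [RHS]mxE -mulmxA -trmx_mul mulmxE -exprS.
Qed.

End ExpTaylor.

Lemma expmx_taylorN (R : realType) n (A : 'M[R]_n) y s :
  expmx_taylor (- A) y (- s) = expmx_taylor A y s.
Proof. by rewrite /expmx_taylor scaleNr scalerN opprK. Qed.

Section LinearFlow.
Variables (R : realType) (n : nat) (A : 'M[R]_n) (f : R -> 'rV[R]_n).
Hypothesis f_ode : forall s, is_derive s (1 : R) f (f s *m A^T).

Let T := expmx_taylor A (f 0).

Lemma linear_ode_taylor_bound t : 0 <= t ->
  exists B c : R, forall K, `|f t - T t K| <= B * (c * t) ^+ K / K`!%:R.
Proof.
move=> t0.
set c := \sum_i \sum_j `|A^T i j|.
have c0 : 0 <= c by apply/sumr_ge0 => i _; exact/sumr_ge0.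
have [B fB] : exists B, forall s, 0 <= s <= t -> `|f s| <= B.
  by apply: derivable_bounded_segment => s; case: (f_ode s).
have B0 : 0 <= B by apply: le_trans (fB 0 _); rewrite ?lexx.
exists B, c.
suff bound K s : 0 <= s <= t -> `|f s - T s K| <= B * (c * s) ^+ K / K`!%:R.
  by move=> K; apply: bound; rewrite lexx t0.
elim: K s => [|K IH] s /andP[s0 st].
  rewrite /T expmx_taylorE big_ord0 subr0 expr0 mulr1 fact0 divr1.
  by apply: fB; rewrite s0.
set bnd := B * c ^+ K.+1.
apply: ler_mx_norm => [|i j].
  by rewrite !mulr_ge0 ?invr_ge0 ?exprn_ge0 ?mulr_ge0.
rewrite [i]ord1.
pose u r := (f r - T r K.+1) 0 j.
pose U r := r ^+ K.+1 / K.+1`!%:R * bnd.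
have du r : is_derive r (1 : R) u (((f r - T r K) *m A^T) 0 j).
  have := is_deriveB (f_ode r) (is_derive_expmx_taylor A (f 0) r K).
  by rewrite -mulmxBl => /is_derive_mxP/(_ 0 j).
have := ler_abs_increment_derive s0 du (fun r => is_derive_exp_coeff K bnd r).
rewrite /u /U /T expmx_taylor0 subrr [X in `|_ - X|]mxE subr0 expr0n /= !mul0r subr0.
have -> : B * (c * s) ^+ K.+1 / K.+1`!%:R = s ^+ K.+1 / K.+1`!%:R * bnd.
  by rewrite /bnd exprMn; ring.
apply=> r /andP[r0 rs].
rewrite (le_trans (ler_mx_entry_norm _ _ _)) // (le_trans (ler_norm_mulmx _ _)) //.
rewrite (@le_trans _ _ (c * (B * (c * r) ^+ K / K`!%:R))) ?ler_wpM2l //.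
  by apply: IH; rewrite ltW //= (le_trans (ltW rs)).
suff -> : c * (B * (c * r) ^+ K / K`!%:R) = r ^+ K / K`!%:R * bnd by [].
by rewrite /bnd exprS exprMn; ring.
Qed.

End LinearFlow.

Lemma linear_ode_taylor_cvg (R : realType) n (A : 'M[R]_n) (f : R -> 'rV[R]_n)
    (t : R) :
  (forall s, is_derive s (1 : R) f (f s *m A^T)) ->
  expmx_taylor A (f 0) t K @[K --> \oo] --> f t.
Proof.
move=> f_ode; wlog t0 : A f t f_ode / 0 <= t.
  move=> gen; have [|t_lt0] := leP 0 t; first exact: gen.
  have g_ode s : is_derive s (1 : R) (fun r => f (- r)) (f (- s) *m (- A)^T).
    by rewrite linearN mulmxN; apply: is_derive_compN.
  have := gen (- A) _ (- t) g_ode.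
  by rewrite oppr_ge0 ltW // opprK oppr0 expmx_taylorN; apply.
have [B [c bound]] := linear_ode_taylor_bound f_ode t0.
exact: cvg_dist_le (cvg_exp_coeff0 B (c * t)) bound.
Qed.

Section LinearFlowExp.
Variables (R : realType) (n : nat) (A : 'M[R]_n) (psi : R -> 'rV[R]_n -> 'rV[R]_n).
Hypothesis psi0 : forall y, psi 0 y = y.
Hypothesis psi_ode : forall t y, is_derive t (1 : R) (psi ^~ y) (psi t y *m A^T).

Lemma linear_flowE t y : psi t y = y *m (mexp (t *: A))^T.
Proof.
pose P := expmx_series (t *: A).
have P_psi z : z *m (P K)^T @[K --> \oo] --> psi t z.
  by have := linear_ode_taylor_cvg (t := t) (psi_ode ^~ z); rewrite psi0.
pose Q := \matrix_(j, b) psi t (ucoord R b) 0 j.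
have P_Q : P @ \oo --> Q.
  apply/cvg_mxP => j b; rewrite mxE.
  have -> : (fun K => P K j b) = (fun K => (ucoord R b *m (P K)^T) 0 j).
    by apply/funext => K; rewrite ucoord_mulmx !mxE.
  by have /cvg_mxP/(_ 0 j) := P_psi (ucoord R b).
have -> : mexp (t *: A) = Q by exact: cvg_lim P_Q.
by apply: (cvg_unique _ (P_psi y)); [exact: norm_hausdorff | exact: cvg_mulmx_trmx].
Qed.

End LinearFlowExp.

Lemma derive_mulmxr (R : realType) m n p (B : 'M[R]_(n, p)) (a v : 'M[R]_(m, n)) :
  'D_v (fun y => y *m B) a = v *m B.
Proof.
rewrite /derive; apply: cvg_lim => //; apply: cvg_near_cst; near=> h.
rewrite /= mulmxDl addrK -scalemxAl scalerA mulVf ?scale1r //.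
by near: h; exact: nbhs_dnbhs_neq.
Unshelve. all: by end_near.
Qed.

Lemma jac_mulmx_trmx (R : realType) n (M : 'M[R]_n) (y : 'rV[R]_n) :
  jac (fun z => z *m M^T) y = M.
Proof.
by apply/matrixP => a mu; rewrite mxE derive_mulmxr ucoord_mulmx !mxE.
Qed.

Lemma OmatE (R : realType) n (C F : 'rV[R]_n -> 'M[R]_n) g (y : 'rV[R]_n) :
  Omat C F g y = C (g y) *m jac g y *m (F y)^T.
Proof.
apply/matrixP => a b; rewrite !mxE exchange_big /=; apply: eq_bigr => mu _.
by rewrite !mxE mulr_suml; apply: eq_bigr => alpha _; rewrite mxE.
Qed.

Lemma xi0E (R : realType) n p (beta : 'M[R]_p) (E : 'I_p -> 'M[R]_n) omega y :
  xi0 beta E omega y = y *m (- Domega beta E omega)^T.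
Proof.
rewrite /xi0 /Domega linearN linear_sum mulmxN mulmx_sumr -sumrN.
apply: eq_bigr => i _; rewrite linearZ -scalemxAr -scalerN; congr (_ *: _).
apply/rowP => b; rewrite !mxE; congr (- _).
by apply: eq_bigr => a _; rewrite [in RHS]mxE mulrC.
Qed.

Theorem mainTheorem5 (R : realType) (n p : nat)
  (beta : 'M[R]_p) (E : 'I_p -> 'M[R]_n)
  (* E^i_{ab} antisymmetric, beta real symmetric nondegenerate *)
  (hE : forall i, (E i)^T = - E i)
  (hbeta_sym : beta^T = beta) (hbeta_nd : beta \in unitmx)
  (* frame e_a^mu(y) (row a) and dual coframe e^a_mu(y) (row a),
     in Riemann normal coordinates y centred at x' (y = 0 is x') *)
  (F C : 'rV[R]_n -> 'M[R]_n)
  (hF0 : F 0 = 1%:M)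
  (hdual : forall y, C y *m (F y)^T = 1%:M)
  (omega : 'rV[R]_p)
  (* psi : one-parameter group generated by xi = omega^i L_i (p = 0) *)
  (psi : R -> 'rV[R]_n -> 'rV[R]_n)
  (hpsi0 : forall y, psi 0 y = y)
  (hpsi_grp : forall s t y, psi (s + t) y = psi s (psi t y))
  (hpsi_flow : forall (t : R) (y : 'rV[R]_n),
      is_derive t (1 : R) (fun s => psi s y) (xi0 beta E omega (psi t y)))
  (hpsi_diff : forall (t : R) (y : 'rV[R]_n), differentiable (psi t) y)
  (t : R) :
  Omat C F (psi t) 0 = mexp (- (t *: Domega beta E omega)).
Proof.
set D := Domega beta E omega.
have psi_ode s y : is_derive s (1 : R) (psi ^~ y) (psi s y *m (- D)^T).
  by rewrite -xi0E.
have psiE y : psi t y = y *m (mexp (- (t *: D)))^T.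
  by rewrite (linear_flowE hpsi0 psi_ode) scalerN.
have C0 : C 0 = 1%:M by have := hdual 0; rewrite hF0 trmx1 mulmx1.
have -> : psi t = fun y => y *m (mexp (- (t *: D)))^T by exact/funext.
by rewrite OmatE jac_mulmx_trmx mul0mx C0 hF0 trmx1 mulmx1 mul1mx.
Qed.
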